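(* Let $E$ be a finite set, $V \subset \mathbb R^E$ a linear subspace defining an oriented matroid $M$, and $F \subset E$. If $F$ is not an acyclic flat of $M$, then $\mathcal Y_V \cap (\mathbb R_{\geq 0}^F \times \infty^{E \setminus F}) = \emptyset$.
   Context: $\mathbb P^1_{\mathbb R} = \mathbb R \cup\{\infty\}$. $\mathcal Y_V$ is the closure of $V \cap \mathbb R_{\geq 0}^E$ in $(\mathbb P^1_{\mathbb R})^E$ in the analytic topology. $\mathbb R_{\geq 0}^F \times \infty^{E\setminus F}$ is the set of points with nonnegative real coordinates on $F$ and coordinate $\infty$ on $E \setminus F$. The oriented matroid $M$ of $V$ has covectors the sign vectors of elements of $V$; its flats are the zero sets $\{i: v_i = 0\}$ of $v\in V$; a flat $F$ is acyclic if some $v \in V$ has $v_i = 0$ for $i \in F$ and $v_i > 0$ for $i \notin F$. *)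

From mathcomp Require Import all_boot all_order all_algebra.
From mathcomp Require Import reals.
Set Implicit Arguments. Unset Strict Implicit. Unset Printing Implicit Defensive.
Import Order.TTheory GRing.Theory Num.Theory.
Local Open Scope ring_scope.

(* The real projective line P^1_R = R ∪ {∞}: [Some x] is the real x,
   [None] is the point ∞. *)
Definition P1 (R : realType) := option R.

Definition is_subspace (R : realType) (E : finType) (V : (E -> R) -> Prop) :=
  [/\ V (fun _ => 0),
      (forall u v, V u -> V v -> V (fun i => u i + v i)) &
      (forall (a : R) v, V v -> V (fun i => a * v i))].

Definition is_flat (R : realType) (E : finType) (V : (E -> R) -> Prop)
    (F : {set E}) :=
  exists v, V v /\ forall i, (v i = 0) <-> (i \in F).

Definition is_acyclic_flat (R : realType) (E : finType)
    (V : (E -> R) -> Prop) (F : {set E}) :=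
  is_flat V F /\
  exists v, V v /\ forall i, (i \in F -> v i = 0) /\ (i \notin F -> 0 < v i).

(* Closure in (P^1_R)^E (analytic = product topology, with the standard
   topology on the one-point compactification R ∪ {∞}) of a set S ⊂ R^E,
   embedded via x ↦ (Some x_i)_i.  Written out with the basic
   neighbourhoods: (x-eps, x+eps) around a real point x, and
   {y : M < |y|} ∪ {∞} around ∞. *)
Definition in_P1_closure (R : realType) (E : finType)
    (S : (E -> R) -> Prop) (p : E -> P1 R) :=
  forall (eps M : R), 0 < eps ->
    exists v, S v /\
      forall i, match p i with
                | Some x => `|v i - x| < eps
                | None => M < `|v i|
                end.

Definition Y_V (R : realType) (E : finType) (V : (E -> R) -> Prop)
    (p : E -> P1 R) :=
  in_P1_closure (fun v => V v /\ forall i, 0 <= v i) p.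

Definition nonneg_inf_box (R : realType) (E : finType) (F : {set E})
    (p : E -> P1 R) :=
  forall i, if i \in F then exists2 x : R, p i = Some x & 0 <= x
            else p i = None.

From mathcomp Require Import all_boot all_order all_algebra.
From mathcomp Require Import reals.
From mathcomp Require Import ring lra.
From Stdlib Require Import Classical.
Set Implicit Arguments. Unset Strict Implicit. Unset Printing Implicit Defensive.
Import Order.TTheory GRing.Theory Num.Theory.
Local Open Scope ring_scope.

(* A point of [Y_V] in the box is approximated by nonnegative vectors [v] of
   [V] that stay bounded on [F] and are arbitrarily large off [F].  A
   Hoffman-type bound lets us correct such a [v] by a uniformly bounded amount
   into a vector [k] of [V] vanishing on [F]; when [v] is large enough off [F]
   the correction cannot destroy positivity there, so [k] is positive off [F]
   and [F] is an acyclic flat. *)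

Section CorrectionBound.

Variables (R : realType) (E : finType) (V : (E -> R) -> Prop).
Hypothesis subV : is_subspace V.

Definition correction_bound (s : seq E) (C : R) :=
  forall v, V v -> exists k, [/\ V k, {in s, forall g, k g = 0} &
    forall i, `|v i - k i| <= C * \sum_(g <- s) `|v g|].

Lemma correction_bound_nil : correction_bound [::] 0.
Proof.
by move=> v Vv; exists v; split=> // i; rewrite subrr normr0 mul0r.
Qed.

Lemma correction_bound_cons_pivot (s : seq E) (g : E) (C : R) (b : E -> R) :
  0 <= C -> correction_bound s C ->
  V b -> {in s, forall h, b h = 0} -> b g = 1 ->
  correction_bound (g :: s) (C + (1 + C) * \sum_i `|b i|).
Proof.
case: subV => _ VD VZ C_ge0 corrC Vb b_s b_g v Vv.
have [k [Vk k_s vk_le]] := corrC v Vv.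
exists (fun i => k i + - k g * b i); split.
- by apply: VD => //; apply: VZ.
- move=> h; rewrite inE => /orP [/eqP ->|hs]; first by rewrite b_g mulr1 subrr.
  by rewrite k_s // b_s // mulr0 addr0.
move=> i; rewrite big_cons.
set m := \sum_(h <- s) `|v h| in vk_le *; set B := \sum_i `|b i|.
have m_ge0 : 0 <= m by exact: sumr_ge0.
have bi_le : `|b i| <= B by rewrite /B (bigD1 i) //= lerDl sumr_ge0.
have kg_le : `|k g| <= `|v g| + C * m.
  have := ler_normD (v g) (k g - v g); rewrite addrC subrK distrC.
  by move/le_trans; apply; rewrite lerD2l vk_le.
have -> : v i - (k i + - k g * b i) = (v i - k i) + k g * b i by ring.
apply: le_trans (ler_normD _ _) _; rewrite normrM.
have kb_le : `|k g| * `|b i| <= (`|v g| + C * m) * B by apply: ler_pM.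
apply: le_trans (lerD (vk_le i) kb_le) _.
have B_ge0 : 0 <= B by apply: le_trans bi_le.
have := mulr_ge0 C_ge0 (normr_ge0 (v g)); have := mulr_ge0 B_ge0 m_ge0.
have := mulr_ge0 (mulr_ge0 C_ge0 B_ge0) (normr_ge0 (v g)); lra.
Qed.

Lemma correction_bound_cons_no_pivot (s : seq E) (g : E) (C : R) :
  0 <= C -> correction_bound s C ->
  (forall b, V b -> {in s, forall h, b h = 0} -> b g = 0) ->
  correction_bound (g :: s) C.
Proof.
move=> C_ge0 corrC no_pivot v Vv.
have [k [Vk k_s vk_le]] := corrC v Vv.
exists k; split=> //.
  by move=> h; rewrite inE => /orP [/eqP ->|]; [exact: no_pivot | exact: k_s].
move=> i; apply: le_trans (vk_le i) _.
by rewrite big_cons ler_wpM2l // lerDr.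
Qed.

Lemma exists_correction_bound (s : seq E) :
  exists2 C : R, 0 <= C & correction_bound s C.
Proof.
elim: s => [|g s [C C_ge0 corrC]]; first by exists 0; last exact: correction_bound_nil.
case: (classic (exists b, [/\ V b, {in s, forall h, b h = 0} & b g != 0])).
  case=> b [Vb b_s b_g].
  pose b' i := (b g)^-1 * b i.
  exists (C + (1 + C) * \sum_i `|b' i|).
    by apply: addr_ge0 => //; apply: mulr_ge0; [exact: addr_ge0 | exact: sumr_ge0].
  apply: correction_bound_cons_pivot => //.
  - by case: subV => _ _; apply.
  - by move=> h hs; rewrite /b' (b_s h hs) mulr0.
  - by rewrite /b' mulVf.
move=> no_pivot; exists C => //.
apply: correction_bound_cons_no_pivot => // b Vb b_s.
by apply/eqP/negPn/negP => b_g; apply: no_pivot; exists b.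
Qed.

End CorrectionBound.

Lemma acyclic_flat_of_witness (R : realType) (E : finType)
    (V : (E -> R) -> Prop) (F : {set E}) (k : E -> R) :
  V k -> (forall i, i \in F -> k i = 0) -> (forall i, i \notin F -> 0 < k i) ->
  is_acyclic_flat V F.
Proof.
move=> Vk k_F k_pos; split; exists k; split=> // i; last by split; [exact: k_F | exact: k_pos].
split=> [ki|]; last exact: k_F.
by apply: contraT => iF; move: (k_pos i iF); rewrite ki ltxx.
Qed.

Lemma Y_V_box_witness (R : realType) (E : finType) (V : (E -> R) -> Prop)
    (F : {set E}) (p : E -> P1 R) :
  is_subspace V -> Y_V V p -> nonneg_inf_box F p ->
  exists k, [/\ V k, forall i, i \in F -> k i = 0 & forall i, i \notin F -> 0 < k i].
Proof.
move=> subV Yp boxp.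
have [C C_ge0 corrC] := exists_correction_bound subV (enum F).
pose S := \sum_(g <- enum F) ((if p g is Some x then `|x| else 0) + 1).
have [v [[Vv v_ge0] v_near]] := Yp 1 (C * S) ltr01.
have [k [Vk k_F vk_le]] := corrC v Vv.
have v_F_le : \sum_(g <- enum F) `|v g| <= S.
  rewrite /S big_seq [leRHS]big_seq; apply: ler_sum => g; rewrite mem_enum => gF.
  have := boxp g; rewrite gF => -[x px _].
  have := v_near g; rewrite px => vx_lt.
  by have := ler_normD (v g - x) x; rewrite subrK; lra.
exists k; split=> // [i iF|i iF]; first by apply: k_F; rewrite mem_enum.
have := boxp i; rewrite (negbTE iF) => pi.
have := v_near i; rewrite pi ger0_norm // => vi_gt.
have := ler_wpM2l C_ge0 v_F_le; have := vk_le i; have := ler_norm (v i - k i).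
lra.
Qed.

Theorem lemma3p2 (R : realType) (E : finType) (V : (E -> R) -> Prop)
    (F : {set E}) :
  is_subspace V ->
  ~ is_acyclic_flat V F ->
  forall p : E -> P1 R, ~ (Y_V V p /\ nonneg_inf_box F p).
Proof.
move=> subV not_acyclic p [Yp boxp]; apply: not_acyclic.
have [k [Vk k_F k_pos]] := Y_V_box_witness subV Yp boxp.
exact: acyclic_flat_of_witness Vk k_F k_pos.
Qed.
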